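(* In the process described in the context, for each item $j$, $\Pr[\text{a medium or tiny blocking event occurs for } j\mid j\in\mathcal R_0]\le O(\alpha^2k^{-1}\log^2(k/\alpha))=o(1)$.
   Context: Consider a $k$-CS-PIP instance: matrix $\vec A\in[0,1]^{m\times n}$ (entries $a_{ij}$), each column having at most $k$ nonzero entries, and $\vec x\in[0,1]^n$ with $\vec A\vec x\le\vec 1$ (an optimal solution of the LP that additionally imposes $\sum_{j:a_{ij}>1/2}x_j\le1$ for every row $i$). Let $\alpha=k^{0.4}$, $\ell=80\log(k/\alpha)$, and for row $i$: $\mathrm{med}(i)=\{j:1/\ell\le a_{ij}\le 1/2\}$, $\mathrm{tiny}(i)=\{j:0<a_{ij}<1/\ell\}$. Let $\mathcal R_0$ contain each item $j$ independently with probability $\alpha x_j/k$. A medium blocking event occurs for $j$ if some row $i$ with $j\in\mathrm{med}(i)$ has $|\mathrm{med}(i)\cap\mathcal R_0|\ge 3$; a tiny blocking event occurs for $j$ if some row $i$ with $j\in\mathrm{tiny}(i)$ has $\sum_{j'\ne j,\ j'\in(\mathrm{med}(i)\cup\mathrm{tiny}(i))\cap\mathcal R_0}a_{ij'}>1-a_{ij}$ or $|\mathrm{med}(i)\cap\mathcal R_0|\ge2$. Asymptotics are as $k\to\infty$. *)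

From HB Require Import structures.
From mathcomp Require Import all_boot all_order all_algebra.
From mathcomp Require Import all_classical all_reals all_analysis.
Set Implicit Arguments. Unset Strict Implicit. Unset Printing Implicit Defensive.
Import Order.TTheory GRing.Theory Num.Theory.
Import numFieldNormedType.Exports.
Local Open Scope ring_scope.

Section KCSPIP.
Variable R : realType.

Definition alpha (k : nat) : R := powR (k%:R) (2 / 5).
Definition ell (k : nat) : R := 80 * ln (k%:R / alpha k).

Variables (m n : nat).

Definition cspip_instance (k : nat) (A : 'M[R]_(m, n)) (x : 'I_n -> R) : Prop :=
  [/\ (forall i j, 0 <= A i j <= 1),
      (forall j, (#|[set i : 'I_m | A i j != 0%R]| <= k)%N),
      (forall j, 0 <= x j <= 1),
      (forall i, \sum_(j < n) A i j * x j <= 1) &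
      (forall i, \sum_(j < n | A i j > 1/2) x j <= 1)].

Definition med (k : nat) (A : 'M[R]_(m, n)) (i : 'I_m) : {set 'I_n} :=
  [set j | ((ell k)^-1 <= A i j) && (A i j <= 1/2)].
Definition tiny (k : nat) (A : 'M[R]_(m, n)) (i : 'I_m) : {set 'I_n} :=
  [set j | (0 < A i j) && (A i j < (ell k)^-1)].

(* Probability of the outcome R0 = S when each item j is included
   independently with probability p j. *)
Definition probS (p : 'I_n -> R) (S : {set 'I_n}) : R :=
  \prod_(j in S) p j * \prod_(j in ~: S) (1 - p j).

Definition Pr (p : 'I_n -> R) (E : pred {set 'I_n}) : R :=
  \sum_(S : {set 'I_n} | E S) probS p S.

Definition condPr (p : 'I_n -> R) (E : pred {set 'I_n}) (j : 'I_n) : R :=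
  Pr p (fun S => E S && (j \in S)) / Pr p (fun S => j \in S).

Definition incl_prob (k : nat) (x : 'I_n -> R) : 'I_n -> R :=
  fun j => alpha k * x j / k%:R.

Definition medium_block (k : nat) (A : 'M[R]_(m, n)) (j : 'I_n)
  (S : {set 'I_n}) : bool :=
  [exists i, (j \in med k A i) && (3 <= #|med k A i :&: S|)%N].

Definition tiny_block (k : nat) (A : 'M[R]_(m, n)) (j : 'I_n)
  (S : {set 'I_n}) : bool :=
  [exists i, (j \in tiny k A i) &&
     ((\sum_(j' in (med k A i :|: tiny k A i) :&: S | j' != j) A i j'
          > 1 - A i j)
      || (2 <= #|med k A i :&: S|)%N)].

End KCSPIP.

Definition lemma3_bound (R : realType) (k : nat) : R :=
  (alpha R k) ^+ 2 / k%:R * (ln (k%:R / alpha R k)) ^+ 2.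

From HB Require Import structures.
From mathcomp Require Import all_boot all_order all_algebra.
From mathcomp Require Import all_classical all_reals all_analysis.
From mathcomp.algebra_tactics Require Import ring lra.
Import Order.TTheory GRing.Theory Num.Theory.
Import numFieldNormedType.Exports.
Set Implicit Arguments. Unset Strict Implicit. Unset Printing Implicit Defensive.
Local Open Scope ring_scope.

(** For a row [i] containing [j], weight the medium
    and tiny items [t != j] of the row by [A i t], and let [U_i] (a [pair_sum])
    be the sum of [w t * w t'] over ordered pairs of distinct selected items.  Every
    blocking event forces [ell^2 U_i >= 1] for some such row: two selected
    medium items already give [U_i >= ell^-2], and a selected load above [3/4]
    made of weights at most [1/2] gives [U_i >= 3/16].  By independence,
    [E[1_(j in R0) U_i] <= p_j (sum_t w t p_t)^2 <= p_j (alpha/k)^2], by the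
    row constraint [A x <= 1].  Markov's inequality summed over the at most
    [k] rows containing [j] yields the bound [ell^2 k (alpha/k)^2], i.e.
    [6400 alpha^2 k^-1 ln^2(k/alpha)], and [alpha^2/k = k^(-1/5)] beats
    [ln^2 k]. *)

Section PairSum.
Variables (R : realFieldType) (n : nat) (c : 'I_n -> R).
Implicit Types S : {set 'I_n}.

Definition pair_sum S : R :=
  \sum_(t1 in S) \sum_(t2 in S | t2 != t1) c t1 * c t2.

Lemma pair_sumE S :
  pair_sum S = (\sum_(t in S) c t) ^+ 2 - \sum_(t in S) c t ^+ 2.
Proof.
rewrite expr2 mulr_suml -sumrB; apply: eq_bigr => t1 t1S.
by rewrite mulr_sumr [in RHS](bigD1 t1) //= -expr2 addrC addrK.
Qed.

Lemma pair_sum_indicator S :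
  pair_sum S = \sum_t1 \sum_(t2 | t2 != t1)
                  c t1 * c t2 * ((t1 \in S)%:R * (t2 \in S)%:R).
Proof.
rewrite /pair_sum big_mkcond; apply: eq_bigr => t1 _.
rewrite big_mkcondl; case: (t1 \in S).
  by apply: eq_bigr => t2 _; rewrite mul1r mulr_natr mulrb.
by symmetry; apply: big1 => t2 _; rewrite mul0r mulr0.
Qed.

Hypothesis c_ge0 : forall t, 0 <= c t.

Lemma pair_sum_ge0 S : 0 <= pair_sum S.
Proof. by apply: sumr_ge0 => t1 _; apply: sumr_ge0 => t2 _; apply: mulr_ge0. Qed.

Lemma pair_sum_ge_mul S t1 t2 :
  t1 \in S -> t2 \in S -> t2 != t1 -> c t1 * c t2 <= pair_sum S.
Proof.
move=> t1S t2S t21; rewrite /pair_sum (bigD1 t1) //= (bigD1 t2) /=; last first.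
  by rewrite t2S t21.
rewrite -addrA lerDl addr_ge0 //; apply: sumr_ge0 => t _.
  exact: mulr_ge0.
by apply: sumr_ge0 => t' _; apply: mulr_ge0.
Qed.

Lemma pair_sum_ge_half S : (forall t, c t <= 1/2) ->
  (\sum_(t in S) c t) ^+ 2 - (\sum_(t in S) c t) / 2 <= pair_sum S.
Proof.
move=> c_le; rewrite pair_sumE lerB // mulr_suml ler_sum // => t _.
by rewrite expr2 ler_wpM2l // -div1r.
Qed.

End PairSum.

Section ProductMeasure.
Variables (R : realType) (n : nat) (p : 'I_n -> R).
Implicit Types S : {set 'I_n}.

Definition Ex (f : {set 'I_n} -> R) : R := \sum_S probS p S * f S.

Lemma Ex_sum (I : Type) (r : seq I) (P : pred I) (f : I -> {set 'I_n} -> R) :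
  Ex (fun S => \sum_(i <- r | P i) f i S) = \sum_(i <- r | P i) Ex (f i).
Proof. by rewrite /Ex exchange_big /=; apply: eq_bigr => S _; rewrite mulr_sumr. Qed.

Lemma ExZ (a : R) (f : {set 'I_n} -> R) : Ex (fun S => a * f S) = a * Ex f.
Proof. by rewrite /Ex mulr_sumr; apply: eq_bigr => S _; rewrite mulrCA. Qed.

Lemma probSE S : probS p S = \prod_t (if t \in S then p t else 1 - p t).
Proof.
rewrite /probS [RHS](bigID (mem S)) /=.
congr (_ * _); apply: eq_big => [t | t]; rewrite ?inE // => tS.
  by rewrite tS.
by rewrite (negbTE tS).
Qed.

Lemma Ex_prod_mem (D : {set 'I_n}) :
  Ex (fun S => \prod_(t in D) ((t \in S)%:R : R)) = \prod_(t in D) p t.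
Proof.
have pE t : (if t \in D then p t else 1) = p t + (if t \in D then 0 else 1 - p t).
  by case: (t \in D); rewrite ?addr0 // addrC subrK.
rewrite big_mkcond /= (eq_bigr _ (fun t _ => pE t)) bigA_distr.
apply: eq_bigr => S _; rewrite probSE [X in _ * X]big_mkcond -big_split /=.
by apply: eq_bigr => t _; case: (t \in S); case: (t \in D); rewrite /= ?mulr1 ?mulr0.
Qed.

Lemma Pr_mem j : Pr p (fun S => j \in S) = p j.
Proof.
have := Ex_prod_mem [set j]; rewrite !big_set1 => <-.
rewrite /Pr /Ex big_mkcond; apply: eq_bigr => S _; rewrite big_set1.
by case: (j \in S); rewrite ?mulr1 ?mulr0.
Qed.

Lemma Ex_mem3 j t1 t2 : t1 != j -> t2 != j -> t2 != t1 ->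
  Ex (fun S => (j \in S)%:R * ((t1 \in S)%:R * (t2 \in S)%:R)) = p j * (p t1 * p t2).
Proof.
move=> t1j t2j t21.
have j12 : j \notin t1 |: [set t2] by rewrite !inE negb_or ![j == _]eq_sym t1j t2j.
have t12 : t1 \notin [set t2] by rewrite inE eq_sym.
have := Ex_prod_mem (j |: (t1 |: [set t2])); rewrite !big_setU1 //= big_set1 => <-.
by apply: eq_bigr => S _; rewrite !big_setU1 //= big_set1.
Qed.

Hypothesis p01 : forall t, 0 <= p t <= 1.

Lemma probS_ge0 S : 0 <= probS p S.
Proof.
rewrite probSE; apply: prodr_ge0 => t _.
by have /andP [? ?] := p01 t; case: ifP; lra.
Qed.

Lemma Pr_le_Ex (E : pred {set 'I_n}) (f : {set 'I_n} -> R) :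
  (forall S, 0 <= f S) -> (forall S, E S -> 1 <= f S) -> Pr p E <= Ex f.
Proof.
move=> f_ge0 Ef; rewrite /Pr /Ex [X in _ <= X](bigID E) /= -[X in X <= _]addr0.
apply: lerD; last by apply: sumr_ge0 => S _; rewrite mulr_ge0 ?probS_ge0.
by apply: ler_sum => S /Ef ?; rewrite -{1}[probS p S]mulr1 ler_wpM2l ?probS_ge0.
Qed.

Lemma Ex_mem_pair_sum j (c : 'I_n -> R) : (forall t, 0 <= c t) -> c j = 0 ->
  Ex (fun S => (j \in S)%:R * pair_sum c S) <= p j * (\sum_t c t * p t) ^+ 2.
Proof.
move=> c_ge0 cj0.
have p_ge0 t : 0 <= p t by case/andP: (p01 t).
(* For distinct [t1, t2] different from [j] the three indicators are
   independent; the terms involving [j] vanish because [c j = 0]. *)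
under eq_fun do rewrite pair_sum_indicator mulr_sumr; rewrite Ex_sum.
rewrite expr2 mulr_suml mulr_sumr ler_sum // => t1 _.
under eq_fun do rewrite mulr_sumr; rewrite Ex_sum.
rewrite mulr_sumr mulr_sumr [X in _ <= X](bigD1 t1) //= ler_wpDl //.
  by rewrite !mulr_ge0.
apply: ler_sum => t2 t21.
under eq_fun do rewrite mulrCA; rewrite ExZ.
have [->|t1j] := eqVneq t1 j; first by rewrite cj0 !(mul0r, mulr0).
have [->|t2j] := eqVneq t2 j; first by rewrite cj0 !(mul0r, mulr0).
by rewrite Ex_mem3 // [leLHS](_ : _ = p j * (c t1 * p t1 * (c t2 * p t2))) //; ring.
Qed.

End ProductMeasure.

Section GrowthBounds.
Variable R : realType.

Lemma alphaE k : (0 < k)%N -> alpha R k = expR (2/5 * ln k%:R).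
Proof. by move=> k_gt0; rewrite /alpha /powR pnatr_eq0 (negbTE (lt0n_neq0 k_gt0)). Qed.

Lemma alpha_gt0 k : (0 < k)%N -> 0 < alpha R k.
Proof. by move=> k_gt0; rewrite alphaE // expR_gt0. Qed.

Lemma alpha_le k : (0 < k)%N -> alpha R k <= k%:R.
Proof. by move=> k_gt0; rewrite /alpha ler1_powR ?ler1n //; lra. Qed.

Lemma ln_div_alpha k : (0 < k)%N -> ln (k%:R / alpha R k) = 3/5 * ln (k%:R : R).
Proof.
move=> k_gt0.
by rewrite alphaE // ln_div ?posrE ?ltr0n ?expR_gt0 // expRK; lra.
Qed.

Lemma ln_nat_ge_half k : (2 <= k)%N -> 1/2 <= ln (k%:R : R).
Proof.
move=> k_ge2; have k_gt0 : (0 : R) < k%:R by rewrite ltr0n; case: k k_ge2.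
have := expR_ge1Dx (- ln (k%:R : R)); rewrite expRN lnK ?posrE // => h.
have : (k%:R : R)^-1 <= 2^-1 by rewrite lef_pV2 ?posrE ?ler_nat //; lra.
lra.
Qed.

Lemma ell_ge4 k : (2 <= k)%N -> 4 <= ell R k.
Proof.
move=> k_ge2; rewrite /ell ln_div_alpha; last by case: k k_ge2.
have := ln_nat_ge_half k_ge2; lra.
Qed.

Lemma incl_prob01 k n (x : 'I_n -> R) : (0 < k)%N ->
  (forall t, 0 <= x t <= 1) -> forall t, 0 <= incl_prob k x t <= 1.
Proof.
move=> k_gt0 x01 t; have /andP [x0 x1] := x01 t.
have k0 : (0 : R) < k%:R by rewrite ltr0n.
have a0 := alpha_gt0 k_gt0; have ak := alpha_le k_gt0.
rewrite /incl_prob ler_pdivrMr // mul1r divr_ge0 ?mulr_ge0 ?ler0n ?(ltW a0) //=.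
by apply: le_trans ak; rewrite -[leRHS]mulr1 ler_wpM2l // ltW.
Qed.

Lemma lemma3_bound_ge0 k : 0 <= lemma3_bound R k.
Proof. by rewrite /lemma3_bound mulr_ge0 ?divr_ge0 ?sqr_ge0. Qed.

Lemma lemma3_bound_le k : (2 <= k)%N -> lemma3_bound R k <= 270 / ln (k%:R : R).
Proof.
move=> k_ge2; have k_gt0 : (0 < k)%N by case: k k_ge2.
set L := ln (k%:R : R); have L_ge := ln_nat_ge_half k_ge2; rewrite -/L in L_ge.
have kE : (k%:R : R) = expR L by rewrite lnK // posrE ltr0n.
rewrite /lemma3_bound ln_div_alpha // alphaE // -/L.
have -> : expR (2 / 5 * L) ^+ 2 / k%:R = (expR (L / 5))^-1.
  by rewrite kE -expRM_natl -expRN -expRN -expRD; congr expR; lra.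
(* The bound is [(3L/5)^2 e^(-L/5)] and [e^(L/5) >= (L/5)^3 / 3!]. *)
have E0 : 0 < expR (L / 5) by exact: expR_gt0.
have E3 : 1 + (L / 5) ^+ 3 / 6 <= expR (L / 5) by apply: (expR_ge1Dxn 2); lra.
have L_gt0 : 0 < L by lra.
rewrite mulrC ler_pdivrMr // [leRHS]mulrAC ler_pdivlMr //.
have : 0 <= L ^+ 3 by rewrite exprn_ge0 // ltW.
lra.
Qed.

End GrowthBounds.

Section Blocking.
Variables (R : realType) (k m n : nat) (A : 'M[R]_(m, n)) (j : 'I_n).
Hypothesis A01 : forall i t, 0 <= A i t <= 1.
Implicit Types (i : 'I_m) (S : {set 'I_n}).
Local Notation l := (ell R k).
(* [lra] does not look at section hypotheses, hence the [have l4 := l_ge4]. *)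
Hypothesis l_ge4 : 4 <= l.

Definition block_weight i t : R :=
  if (t != j) && (t \in med k A i :|: tiny k A i) then A i t else 0.

Lemma block_weight_ge0 i t : 0 <= block_weight i t.
Proof. by rewrite /block_weight; case: ifP => // _; case/andP: (A01 i t). Qed.

Lemma block_weight_le i t : block_weight i t <= A i t.
Proof. by rewrite /block_weight; case: ifP => // _; case/andP: (A01 i t). Qed.

Lemma block_weight_le_half i t : block_weight i t <= 1/2.
Proof.
rewrite /block_weight; case: ifP => [/andP [_] | _]; last by lra.
have l4 := l_ge4; have : l^-1 <= 4^-1 by rewrite lef_pV2 ?posrE //; lra.
by rewrite !inE => ? /orP [/andP [_ ->] | /andP [_ ?]] //; lra.
Qed.

Lemma block_weight_med i t : t \in med k A i -> t != j -> l^-1 <= block_weight i t.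
Proof.
move=> t_med tj; rewrite /block_weight tj inE t_med /=.
by move: t_med; rewrite inE => /andP [].
Qed.

Lemma sum_block_weight i S : \sum_(t in S) block_weight i t =
  \sum_(j' in (med k A i :|: tiny k A i) :&: S | j' != j) A i j'.
Proof.
rewrite big_mkcond [RHS]big_mkcond; apply: eq_bigr => t _.
rewrite /block_weight [t \in _ :&: S]inE.
by case: (t \in S); case: (t != j); case: (t \in _ :|: _).
Qed.

Lemma pair_sum_two_med i S : (2 <= #|(med k A i :&: S) :\ j|)%N ->
  1 <= l ^+ 2 * pair_sum (block_weight i) S.
Proof.
case/card_gt1P => t1 [t2 [/setD1P [t1j /setIP [t1_med t1S]]
  /setD1P [t2j /setIP [t2_med t2S]] t12]].
have w1 := block_weight_med t1_med t1j; have w2 := block_weight_med t2_med t2j.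
have := pair_sum_ge_mul (block_weight_ge0 i) t1S t2S; rewrite eq_sym => /(_ t12).
have l4 := l_ge4.
have l_inv_ge0 : 0 <= l^-1 by rewrite invr_ge0; lra.
have : l^-1 * l^-1 <= block_weight i t1 * block_weight i t2 by apply: ler_pM.
have : l^-1 * l = 1 by rewrite mulVf //; lra.
nra.
Qed.

Lemma pair_sum_heavy i S : A i j < l^-1 ->
  1 - A i j < \sum_(t in S) block_weight i t ->
  1 <= l ^+ 2 * pair_sum (block_weight i) S.
Proof.
move=> j_tiny; set T := \sum_(t in S) _ => T_big.
have l4 := l_ge4; have : l^-1 <= 4^-1 by rewrite lef_pV2 ?posrE //; lra.
have := pair_sum_ge_half (block_weight_ge0 i) S (block_weight_le_half i).
rewrite -/T => pair_ge l_inv.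
have : 3/16 <= pair_sum (block_weight i) S by nra.
nra.
Qed.

Lemma blocking_pair_sum S : j \in S ->
  medium_block k A j S || tiny_block k A j S ->
  exists2 i, A i j != 0 & 1 <= l ^+ 2 * pair_sum (block_weight i) S.
Proof.
have l4 := l_ge4; have l_inv_gt0 : 0 < l^-1 by rewrite invr_gt0; lra.
move=> jS /orP [] /existsP [i /andP [j_in blocks]].
  exists i; first by move: j_in; rewrite inE => /andP [? _]; rewrite lt0r_neq0 //; lra.
  apply: pair_sum_two_med; move: (cardsD1 j (med k A i :&: S)).
  by rewrite [j \in _ :&: _]inE j_in jS => e; move: blocks; rewrite e add1n ltnS.
move: j_in; rewrite inE => /andP [A_gt0 A_small].
exists i; first by rewrite lt0r_neq0.
case/orP: blocks => [heavy | two_med].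
  by apply: pair_sum_heavy; rewrite ?sum_block_weight.
apply: pair_sum_two_med; move: (cardsD1 j (med k A i :&: S)).
have j_med : j \notin med k A i by rewrite inE negb_and -ltNge A_small.
by rewrite [j \in _ :&: _]inE (negbTE j_med) /= add0n => <-.
Qed.

End Blocking.

Section Main.
Variables (R : realType) (k m n : nat) (A : 'M[R]_(m, n)) (x : 'I_n -> R) (j : 'I_n).
Hypothesis inst : cspip_instance k A x.
Hypothesis k_ge2 : (2 <= k)%N.
Local Notation p := (incl_prob k x).
Local Notation blocked := (fun S => medium_block k A j S || tiny_block k A j S).
Local Notation rows_j := [set i | A i j != 0].

Let k_gt0 : (0 < k)%N. Proof. by case: k k_ge2. Qed.

Let p01 t : 0 <= p t <= 1.
Proof. by case: inst => _ _ x01 _ _; apply: incl_prob01. Qed.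

Lemma sum_block_weight_incl_prob i :
  \sum_t block_weight k A j i t * p t <= alpha R k / k%:R.
Proof.
have [A01 _ _ row_le1 _] := inst.
have k0 : (0 : R) < k%:R by rewrite ltr0n.
have a0 := alpha_gt0 R k_gt0.
apply: (@le_trans _ _ (\sum_t A i t * p t)).
  by apply: ler_sum => t _; rewrite ler_wpM2r ?block_weight_le //; case/andP: (p01 t).
have -> : \sum_t A i t * p t = alpha R k / k%:R * \sum_t A i t * x t.
  by rewrite mulr_sumr; apply: eq_bigr => t _; rewrite /incl_prob; ring.
rewrite -[X in _ <= X]mulr1 ler_wpM2l //.
by rewrite divr_ge0 ?(ltW a0) ?(ltW k0).
Qed.

Lemma Ex_block_pair_sum_le i :
  Ex p (fun S => (j \in S)%:R * pair_sum (block_weight k A j i) S)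
  <= p j * (alpha R k / k%:R) ^+ 2.
Proof.
have w_ge0 t : 0 <= block_weight k A j i t.
  by apply: block_weight_ge0; case: inst.
apply: le_trans (Ex_mem_pair_sum p01 w_ge0 _) _; first by rewrite /block_weight eqxx.
apply: ler_wpM2l; first by case/andP: (p01 j).
rewrite ler_pXn2r ?nnegrE ?sum_block_weight_incl_prob //.
  by apply: sumr_ge0 => t _; rewrite mulr_ge0 //; case/andP: (p01 t).
by rewrite divr_ge0 ?ltW ?alpha_gt0 ?ltr0n.
Qed.

Lemma Pr_blocked_le : Pr p (fun S => blocked S && (j \in S)) <=
  ell R k ^+ 2 * \sum_(i in rows_j)
    Ex p (fun S => (j \in S)%:R * pair_sum (block_weight k A j i) S).
Proof.
have [A01 _ _ _ _] := inst.
have pair_ge0 i S : 0 <= pair_sum (block_weight k A j i) S.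
  by apply: pair_sum_ge0 => t; apply: block_weight_ge0.
rewrite -Ex_sum -ExZ; apply: Pr_le_Ex => [//| S | S /andP [blocks jS]].
  by rewrite mulr_ge0 ?sqr_ge0 // sumr_ge0 // => i _; rewrite mulr_ge0.
have [i Aij pair_big] := blocking_pair_sum A01 (ell_ge4 R k_ge2) jS blocks.
apply: le_trans pair_big _; rewrite ler_wpM2l ?sqr_ge0 //.
rewrite (bigD1 i) ?inE //= jS mul1r lerDl.
by apply: sumr_ge0 => i' _; rewrite mulr_ge0.
Qed.

Lemma condPr_blocked_le : condPr p blocked j <= 6400 * lemma3_bound R k.
Proof.
rewrite /condPr Pr_mem.
(* If [p j = 0], the conditional probability is [_ / 0 = 0]. *)
have [pj0 | pj_neq0] := eqVneq (p j) 0.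
  rewrite pj0 invr0 mulr0; apply: mulr_ge0; [lra | exact: lemma3_bound_ge0].
have pj_gt0 : 0 < p j by rewrite lt0r pj_neq0; case/andP: (p01 j).
have l2_ge0 : 0 <= ell R k ^+ 2 by apply: sqr_ge0.
rewrite ler_pdivrMr //; apply: le_trans Pr_blocked_le _.
apply: le_trans (ler_wpM2l l2_ge0 (ler_sum _ (fun i _ => Ex_block_pair_sum_le i))) _.
rewrite sumr_const -[_ *+ #|rows_j|]mulr_natr.
have -> : 6400 * lemma3_bound R k * p j =
          ell R k ^+ 2 * (p j * (alpha R k / k%:R) ^+ 2 * k%:R).
  by rewrite /ell /lemma3_bound; field; rewrite pnatr_eq0 -lt0n.
apply: (ler_wpM2l l2_ge0); apply: ler_wpM2l; first by rewrite mulr_ge0 ?sqr_ge0 ?ltW.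
by rewrite ler_nat; case: inst.
Qed.

End Main.

Local Open Scope classical_set_scope.
Local Open Scope ring_scope.

Lemma lemma3_bound_cvg (R : realType) : lemma3_bound R @ \oo --> (0 : R).
Proof.
apply/cvgrPdist_lt => e e_gt0.
exists (maxn 2 (Num.truncn (expR (270 / e))).+1) => // k /=.
rewrite geq_max => /andP [k_ge2 k_big].
have k0 : (0 : R) < k%:R by rewrite ltr0n; case: k k_ge2 {k_big}.
have L_big : 270 / e < ln (k%:R : R).
  rewrite -ltr_expR lnK ?posrE //.
  by apply: lt_le_trans (truncnS_gt _) _; rewrite ler_nat.
have L_gt0 : 0 < ln (k%:R : R) by apply: lt_trans L_big; rewrite divr_gt0.
rewrite sub0r normrN ger0_norm ?lemma3_bound_ge0 //.
apply: le_lt_trans (lemma3_bound_le R k_ge2) _.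
by rewrite ltr_pdivrMr // mulrC -ltr_pdivrMr.
Qed.

Theorem lemma3 (R : realType) :
  (exists C : R, exists K0 : nat,
     forall k : nat, (K0 <= k)%N ->
     forall (m n : nat) (A : 'M[R]_(m, n)) (x : 'I_n -> R),
       cspip_instance k A x ->
       forall j : 'I_n,
         condPr (incl_prob k x)
           (fun S => medium_block k A j S || tiny_block k A j S) j
         <= C * lemma3_bound R k)
  /\ (lemma3_bound R @ \oo --> (0 : R)).
Proof.
split; last exact: lemma3_bound_cvg.
exists 6400, 2%N => k k_ge2 m n A x inst j.
exact: condPr_blocked_le.
Qed.
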